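(* Let $k\ge2$ and $n\le0$, and write $q=q_{n,k}$, $r=r_{n,k}$. (a) If $r=0$ and $q\ge2$ (equivalently $|n|\ge2k-1$), then the coefficient of $x^{|n|+1-2k}$ in $\mathcal{F}_{n,k}(x)$ is $2q-3$ when $k=2$ and $q-1$ when $k\ge3$. (b) If $1\le r\le k-1$ and $q\ge r+1$ (equivalently $|n|\ge k(r+1)-1$), then the coefficient of $x^{|n|+1-k(r+1)}$ in $\mathcal{F}_{n,k}(x)$ is $(-1)^r(r+1)\binom{q-1}{r}$. In both cases the exponent in question is the degree of $\mathcal{F}_{n,k}$ minus $k$. No monomial of $\mathcal{F}_{n,k}$ has exponent strictly between this exponent and the degree.
   Context: For $k\ge2$, the polynomials $\mathcal{F}_{n,k}(x)\in\mathbb{Z}[x]$ ($n\in\mathbb{Z}$) are defined by $\mathcal{F}_{1,k}=1$, $\mathcal{F}_{n,k}=0$ for $n=0,-1,\dots,-(k-2)$, and $\mathcal{F}_{n,k}(x)=\sum_{j=1}^{k}x^{k-j}\mathcal{F}_{n-j,k}(x)$ for all $n\in\mathbb{Z}$. This recurrence is used upwards for $n\ge2$, and downwards for $n\le-(k-1)$ as $\mathcal{F}_{n,k}=\mathcal{F}_{n+k,k}-\sum_{j=1}^{k-1}x^j\mathcal{F}_{n+j,k}$. For $n\le0$, set $q_{n,k}=\lfloor(|n|+1)/k\rfloor$ and let $r_{n,k}\in\{0,\dots,k-1\}$ be the residue of $|n|+1$ modulo $k$. Then $|n|+1=kq_{n,k}+r_{n,k}$. *)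

From mathcomp Require Import all_boot all_order all_algebra.
Set Implicit Arguments. Unset Strict Implicit. Unset Printing Implicit Defensive.
Import GRing.Theory Num.Theory.
Local Open Scope ring_scope.

(* Hneg_list k m = [:: H m; H (m-1); ...; H 0]
   where H m := F_{1-m,k}.  H 0 = F_1 = 1, H m = 0 for 1 <= m <= k-1,
   and for m >= k the downward recurrence
   F_n = F_{n+k} - sum_{j=1}^{k-1} x^j F_{n+j}  (n = 1-m). *)
Fixpoint Hneg_list (k : nat) (m : nat) : seq {poly int} :=
  match m with
  | 0 => [:: 1]
  | m'.+1 =>
      let s := Hneg_list k m' in
      (if (m'.+1 < k)%N then 0
       else s`_(k.-1) - \sum_(1 <= j < k) 'X^j * s`_(j.-1)) :: s
  end.

(* Fpos_list k m = [:: F_{m+1}; ...; F_1];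
   F_{n} = sum_{j=1}^k x^{k-j} F_{n-j} for n >= 2, with F_{n-j} = 0 when
   n - j <= 0 (then 2-k <= n-j <= 0), realized by the default 0 of nth. *)
Fixpoint Fpos_list (k : nat) (m : nat) : seq {poly int} :=
  match m with
  | 0 => [:: 1]
  | m'.+1 =>
      let s := Fpos_list k m' in
      (\sum_(1 <= j < k.+1) 'X^(k - j) * s`_(j.-1)) :: s
  end.

Definition Fcal (n : int) (k : nat) : {poly int} :=
  match n with
  | Posz m.+1 => head 0 (Fpos_list k m)
  | _ => head 0 (Hneg_list k (`|n|%N.+1))
  end.

Definition qnk (n : int) (k : nat) : nat := ((`|n|%N).+1 %/ k)%N.
Definition rnk (n : int) (k : nat) : nat := ((`|n|%N).+1 %% k)%N.

From mathcomp Require Import all_boot all_order all_algebra.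
From mathcomp Require Import zify ring.
Import GRing.Theory Num.Theory.
Local Open Scope ring_scope.

(* Write c(m, j) for the coefficient of x^j in F_{1-k-m,k}.  The downward
   recurrence becomes  sum_{i<k} c(m-i, j-i) = [m = j = 0] + c(m-k, j),  and
   subtracting this identity from its shift by (1, 1) telescopes the sum away,
   leaving a five-term relation.  By induction on m it confines the support of
   c to the diagonals m = j + k s (s >= 0), and along the s-th diagonal,
   indexed by j = k i + rho, it becomes a Pascal-type recurrence in (s, i).
   Solving it gives 0 for s + 1 < rho < k, signed binomial coefficients for
   rho = s + 1 and rho = s, and an explicit linear sequence for s = 1, rho = 0.
   The degree of F_{n,k} is then read off from the highest nonzero diagonal
   entry, and the coefficient k below it from the next diagonal. *)

Lemma mulz_natS (a i : nat) : a%:Z * i.+1%:Z = a%:Z * i%:Z + a%:Z.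
Proof. by rewrite -addn1 PoszD mulrDr mulr1. Qed.

Lemma mulz_nat_ge0 (a i : nat) : 0 <= a%:Z * i%:Z.
Proof. by rewrite -PoszM. Qed.

Lemma size_pred_eq (R : nzSemiRingType) (p : {poly R}) (d : nat) :
  p`_d != 0 -> (forall j, (d < j)%N -> p`_j = 0) -> (size p).-1 = d.
Proof.
move=> pd_neq0 p_above.
have : (size p <= d.+1)%N by apply/leq_sizeP.
have : (d < size p)%N by rewrite ltnNge; apply: contra pd_neq0 => /leq_sizeP->.
lia.
Qed.

Section NegativeIndices.

Variable k : nat.
Hypothesis k_gt0 : (0 < k)%N.

(* [Fneg m] is F_{1-m,k}. *)
Definition Fneg (m : nat) : {poly int} := head 0 (Hneg_list k m).

Lemma nth_Hneg_list m i : (i <= m)%N -> (Hneg_list k m)`_i = Fneg (m - i).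
Proof. by elim: m i => [|m IH] [|i] hi //=; rewrite IH // subSS. Qed.

Lemma Fneg_small m : (0 < m < k)%N -> Fneg m = 0.
Proof. by case: m => [|m] //= hm; rewrite /Fneg /= hm. Qed.

Lemma Fneg_rec m : (k <= m)%N ->
  Fneg m = Fneg (m - k) - \sum_(1 <= j < k) 'X^j * Fneg (m - j).
Proof.
case: m => [|m] hkm; first by lia.
rewrite /Fneg /= ltnNge hkm /= nth_Hneg_list; last by lia.
have -> : (m - k.-1 = m.+1 - k)%N by lia.
congr (_ - _); apply: eq_big_nat => j hj.
by rewrite nth_Hneg_list; [have -> : (m - j.-1 = m.+1 - j)%N by lia | lia].
Qed.

(* [coefF m j] is the coefficient of x^j in F_{1-k-m,k}, extended by 0 to
   negative arguments so that the recurrences below hold on all of Z^2. *)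
Definition coefF (m j : int) : int :=
  if (0 <= m) && (0 <= j) then (Fneg (`|m|%N + k))`_`|j| else 0.

Lemma coef_Fneg t j :
  (Fneg t)`_j = ((t == 0%N) && (j == 0%N))%:Z + coefF (t%:Z - k%:Z) j%:Z.
Proof.
rewrite /coefF; case: (ltnP t k) => htk.
- have -> : (0 <= t%:Z - k%:Z) = false by lia.
  case: t htk => [|t] htk; first by rewrite /Fneg /= coef1 addr0; case: j.
  by rewrite Fneg_small ?coef0 //; lia.
- have -> : (0 <= t%:Z - k%:Z) = true by lia.
  have -> : (t == 0%N) = false by lia.
  have -> : (`|t%:Z - k%:Z|%N + k = t)%N by lia.
  by rewrite add0r.
Qed.

Lemma coefF_out m j : (m < 0) || (j < 0) -> coefF m j = 0.
Proof. by rewrite /coefF => h; have -> : (0 <= m) && (0 <= j) = false by lia. Qed.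

Lemma coefF_sum m j :
  \sum_(0 <= i < k) coefF (m - i%:Z) (j - i%:Z) =
  ((m == 0) && (j == 0))%:Z + coefF (m - k%:Z) j.
Proof.
have [mj_neg | mj_nneg] := boolP ((m < 0) || (j < 0)).
  rewrite big1_seq => [|i _]; last by apply: coefF_out; lia.
  by rewrite coefF_out; [have -> : (m == 0) && (j == 0) = false by lia | lia].
have [a ->] : exists a : nat, m = a%:Z by exists `|m|%N; lia.
have [b ->] : exists b : nat, j = b%:Z by exists `|j|%N; lia.
rewrite big_ltn // !subr0.
have -> : \sum_(1 <= i < k) coefF (a%:Z - i%:Z) (b%:Z - i%:Z) =
          \sum_(1 <= i < k) ('X^i * Fneg (a + k - i))`_b.
  apply: eq_big_nat => i hi; rewrite coefXnM coef_Fneg.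
  case: ifP => hbi; first by rewrite coefF_out //; lia.
  have -> : ((a + k - i == 0)%N && (b - i == 0)%N) = false by lia.
  by rewrite add0r; congr coefF; lia.
have -> : coefF a b = (Fneg (a + k))`_b by [].
rewrite Fneg_rec ?leq_addl // addnK coefB coef_sum coef_Fneg subrK.
by congr (_ + _); lia.
Qed.

Lemma coefF_diff m j :
  coefF m j - coefF (m - k%:Z) (j - k%:Z) =
  ((m == 0) && (j == 0))%:Z - ((m - 1 == 0) && (j - 1 == 0))%:Z
  + coefF (m - k%:Z) j - coefF (m - 1 - k%:Z) (j - 1).
Proof.
pose f i := coefF (m - i%:Z) (j - i%:Z).
have := telescope_sumr f (leq0n k).
have -> : \sum_(0 <= i < k) (f i.+1 - f i) =
          \sum_(0 <= i < k) coefF (m - 1 - i%:Z) (j - 1 - i%:Z) -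
          \sum_(0 <= i < k) coefF (m - i%:Z) (j - i%:Z).
  by rewrite sumrB; congr (_ - _); apply: eq_bigr => i _; congr coefF; lia.
rewrite !coefF_sum /f !subr0 => telescoped.
by rewrite -opprB -telescoped; ring.
Qed.

Lemma coefF_support m j : coefF m j != 0 ->
  0 <= j /\ exists s : nat, m = j + k%:Z * s%:Z.
Proof.
have [n] : exists n : nat, m < n%:Z by exists `|m|.+1%N; lia.
elim: n m j => [|n IH] m j hm hC.
  by move: hC; rewrite coefF_out ?eqxx //; lia.
have hj : 0 <= j by move: hC; rewrite /coefF; case: ifP => // /andP[].
split => //.
have IHm m' j' : m' < m -> coefF m' j' != 0 -> exists s : nat, m' = j' + k%:Z * s%:Z.
  by move=> lt_m nz; have [|_] := IH m' j' _ nz; first lia.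
move: hC; rewrite -[coefF m j](subrK (coefF (m - k%:Z) (j - k%:Z))) coefF_diff.
have [-> | nz] := eqVneq (coefF (m - k%:Z) (j - k%:Z)) 0; last first.
  by have [|s hs] := IHm _ _ _ nz; [lia | exists s; lia].
have [-> | nz] := eqVneq (coefF (m - k%:Z) j) 0; last first.
  by have [|s hs] := IHm _ _ _ nz; [lia | exists s.+1; rewrite mulz_natS; lia].
have [-> | nz] := eqVneq (coefF (m - 1 - k%:Z) (j - 1)) 0; last first.
  by have [|s hs] := IHm _ _ _ nz; [lia | exists s.+1; rewrite mulz_natS; lia].
exists 0%N; move: hC; rewrite mulr0 addr0.
have [/andP[/eqP-> /eqP->] // | _] := boolP ((m == 0) && (j == 0)).
have [|_] := boolP ((m - 1 == 0) && (j - 1 == 0)); first lia.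
by rewrite !(addr0, subr0) eqxx.
Qed.

Lemma coefF_lt m j : m < j -> coefF m j = 0.
Proof.
move=> lt_mj; apply/eqP; apply: contraT => /coefF_support[_ [s hs]].
by have := mulz_nat_ge0 k s; lia.
Qed.

Lemma coefF_gap e t i : (e < i < e + k)%N -> coefF (e%:Z + k%:Z * t%:Z) i%:Z = 0.
Proof.
move=> hi; apply/eqP; apply: contraT => /coefF_support[_ [s]].
rewrite -!PoszM -!PoszD => /eqP; rewrite eqz_nat => /eqP hs.
have [le_st | lt_ts] := leqP s t.
- have [d def_t] : exists d, t = (s + d)%N by exists (t - s)%N; lia.
  by move: hs; rewrite def_t mulnDr; case: d {def_t} => [|d]; rewrite ?mulnS; lia.
- have [d def_s] : exists d, s = (t + d.+1)%N by exists (s - t.+1)%N; lia.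
  by move: hs; rewrite def_s mulnDr mulnS; lia.
Qed.

Definition diag (s : nat) (j : int) : int := coefF (j + k%:Z * s%:Z) j.

Lemma diag_neg s j : j < 0 -> diag s j = 0.
Proof. by move=> j_lt0; rewrite /diag coefF_out //; lia. Qed.

Lemma diagS s j : diag s.+1 j = diag s.+1 (j - k%:Z) + diag s j - diag s (j - 1).
Proof.
have := coefF_diff (j + k%:Z * s.+1%:Z) j; have := mulz_nat_ge0 k s.
rewrite /diag mulz_natS => ks_ge0.
have -> : j + (k%:Z * s%:Z + k%:Z) - k%:Z = j + k%:Z * s%:Z by lia.
have -> : j - k%:Z + (k%:Z * s%:Z + k%:Z) = j + k%:Z * s%:Z by lia.
have -> : j + (k%:Z * s%:Z + k%:Z) - 1 - k%:Z = j - 1 + k%:Z * s%:Z by lia.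
lia.
Qed.

Lemma diag0 j : diag 0 j = diag 0 (j - k%:Z) + (j == 0)%:Z - (j == 1)%:Z.
Proof.
have := coefF_diff j j; rewrite /diag !mulr0 !addr0.
by rewrite [coefF (j - k%:Z) j]coefF_lt 1?[coefF (j - 1 - k%:Z) _]coefF_lt; lia.
Qed.

Lemma diagS_step s i rho : (rho < k)%N -> (0 < k * i + rho)%N ->
  diag s.+1 (k * i + rho)%N =
    (if i is i'.+1 then diag s.+1 (k * i' + rho)%N else 0)
    + diag s (k * i + rho)%N - diag s (k * i + rho).-1.
Proof.
move=> rho_lt_k pos; rewrite diagS; congr (_ + _ - diag s _); last by lia.
case: i pos => [|i] pos; first by rewrite diag_neg //; lia.
by congr diag; rewrite mulnS; lia.
Qed.

Lemma diag0_step i rho : (rho < k)%N ->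
  diag 0 (k * i + rho)%N =
    (if i is i'.+1 then diag 0 (k * i' + rho)%N else 0)
    + (k * i + rho == 0)%N%:Z - (k * i + rho == 1)%N%:Z.
Proof.
move=> rho_lt_k; rewrite diag0; congr (_ + _ - _); try lia.
case: i => [|i]; first by rewrite diag_neg //; lia.
by congr diag; rewrite mulnS; lia.
Qed.

Lemma diag_zero s rho i : (s.+1 < rho < k)%N -> diag s (k * i + rho)%N = 0.
Proof.
elim: s rho i => [|s IHs] rho i hrho.
  by elim: i => [|i IHi]; rewrite diag0_step //=; lia.
case: rho hrho => [|rho] hrho; first by [].
have zero_rho l : diag s (k * l + rho)%N = 0 by apply: IHs; lia.
have zero_rhoS l : diag s (k * l + rho.+1)%N = 0 by apply: IHs; lia.
by elim: i => [|i IHi]; rewrite diagS_step ?IHi ?zero_rhoS ?addnS /= ?zero_rho; lia.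
Qed.

Lemma diag_subdiag s i : (s.+1 < k)%N ->
  diag s (k * i + s.+1)%N = (-1) ^+ s.+1 * 'C(s + i, i)%:Z.
Proof.
elim: s i => [|s IHs] i hs.
  by elim: i => [|i IHi]; rewrite diag0_step // ?IHi /= !add0n !binn expr1 mulN1r; lia.
have zero_s2 l : diag s (k * l + s.+2)%N = 0 by apply: diag_zero; lia.
have pred_s2 l : (k * l + s.+2).-1 = (k * l + s.+1)%N by rewrite addnS.
elim: i => [|i IHi]; rewrite diagS_step ?zero_s2 ?pred_s2 ?IHs /=; try lia.
  by rewrite !addn0 !bin0 !exprS; ring.
rewrite IHi !addSn !addnS [in RHS]binS PoszD !exprS; ring.
Qed.

Lemma diag_main s i : (1 < k)%N -> (s < k)%N ->
  diag s (k * i + s)%N = (-1) ^+ s * s.+1%:Z * 'C(s + i, s)%:Z.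
Proof.
move=> k_gt1; elim: s i => [|s IHs] i hs.
  by elim: i => [|i IHi]; rewrite diag0_step // ?IHi /= bin0 expr0 !mul1r; lia.
have pred_s1 l : (k * l + s.+1).-1 = (k * l + s)%N by rewrite addnS.
elim: i => [|i IHi];
  rewrite diagS_step ?diag_subdiag ?pred_s1 ?IHs /=; try lia.
  by rewrite !addn0 !bin0 !binn !exprS -[s.+2]addn1 PoszD; ring.
have binC : 'C((s + i).+1, i.+1) = 'C((s + i).+1, s).
  by rewrite -bin_sub ?ltnS ?leq_addl // subSS addnK.
rewrite IHi !addSn !addnS binC [in RHS]binS -[s.+2]addn1 PoszD !exprS; ring.
Qed.

Lemma diag1_mulk i : (1 < k)%N ->
  diag 1 (k * i)%N = (if k == 2%N then 2 * i%:Z + 1 else i%:Z + 1).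
Proof.
move=> k_gt1; rewrite -[(k * i)%N]addn0.
elim: i => [|i IHi].
  rewrite diagS (diag_main 0 0) // (diag_neg 1) ?(diag_neg 0); try lia.
  by rewrite bin0 expr0 !mul1r; case: ifP; lia.
rewrite diagS_step ?(diag_main 0) //=; try lia.
have -> : (k * i.+1 + 0).-1 = (k * i + k.-1)%N by rewrite mulnS; lia.
rewrite IHi bin0 expr0 !mul1r; have [k2 | k_neq2] := eqVneq k 2%N.
  have -> : k.-1 = 1%N by rewrite k2.
  by rewrite (diag_subdiag 0) // add0n binn; lia.
by rewrite diag_zero; lia.
Qed.

Lemma coef_Fneg_diag s j : (Fneg (j + k * s.+1))`_j = diag s j%:Z.
Proof.
rewrite coef_Fneg; have -> : (j + k * s.+1 == 0)%N = false by lia.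
by rewrite add0r /diag; congr coefF; rewrite mulnS; lia.
Qed.

Lemma Fneg_gap e s i : (e < i < e + k)%N -> (Fneg (e + k * s.+1))`_i = 0.
Proof.
move=> hi; rewrite coef_Fneg; have -> : (e + k * s.+1 == 0)%N = false by lia.
by rewrite add0r -(coefF_gap e s i hi); congr coefF; rewrite mulnS; lia.
Qed.

Lemma coef_Fneg_above t j : (0 < j)%N -> (t < j + k)%N -> (Fneg t)`_j = 0.
Proof.
move=> j_gt0 hj; rewrite coef_Fneg coefF_lt; last by lia.
by have -> : (t == 0%N) && (j == 0%N) = false by lia.
Qed.

Lemma coef_Fneg_mulk Q : (1 < k)%N ->
  (Fneg (Q.+2 * k))`_(Q * k) = (if k == 2%N then 2 * Q%:Z + 1 else Q%:Z + 1).
Proof.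
move=> k_gt1; have -> : (Q.+2 * k = Q * k + k * 1%N.+1)%N by lia.
by rewrite coef_Fneg_diag mulnC diag1_mulk.
Qed.

Lemma size_Fneg_mulk Q : (1 < k)%N -> (size (Fneg (Q.+1 * k))).-1 = (Q * k)%N.
Proof.
move=> k_gt1; apply: size_pred_eq => [|j hj]; last by apply: coef_Fneg_above; lia.
have -> : (Q.+1 * k = Q * k + k * 0%N.+1)%N by lia.
by rewrite coef_Fneg_diag mulnC -[(k * Q)%N]addn0 diag_main // bin0 expr0 !mul1r.
Qed.

Lemma coef_Fneg_rem Q r : (1 < k)%N -> (r < k)%N ->
  (Fneg ((Q + r.+1) * k + r))`_(Q * k + r) = (-1) ^+ r * r.+1%:Z * 'C(Q + r, r)%:Z.
Proof.
move=> k_gt1 r_lt_k; have -> : ((Q + r.+1) * k + r = Q * k + r + k * r.+1)%N by lia.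
by rewrite coef_Fneg_diag mulnC diag_main // addnC.
Qed.

Lemma size_Fneg_rem Q r : (0 < r < k)%N ->
  (size (Fneg ((Q + r) * k + r))).-1 = (Q * k + r)%N.
Proof.
case: r => [|r] // hr; apply: size_pred_eq => [|j hj].
  have -> : ((Q + r.+1) * k + r.+1 = Q * k + r.+1 + k * r.+1)%N by lia.
  rewrite coef_Fneg_diag mulnC diag_subdiag // mulf_eq0 signr_eq0 /=.
  by have := @bin_gt0 (r + Q) Q; rewrite leq_addl; lia.
rewrite coef_Fneg; have -> : ((Q + r.+1) * k + r.+1 == 0)%N = false by lia.
rewrite add0r; apply/eqP; apply: contraT => nz.
have [_ [s hs]] := coefF_support _ _ nz.
have [r_le_s | s_lt_r] := leqP r s.
  have : (k * r <= k * s)%N by rewrite leq_mul2l r_le_s orbT.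
  lia.
have [d def_r] : exists d, r = (s + d.+1)%N by exists (r - s.+1)%N; lia.
move: nz; rewrite hs -/(diag s j%:Z).
have -> : j = (k * (Q + d.+1) + (s + d.+1).+1)%N by move: hs; rewrite def_r; lia.
by rewrite diag_zero ?eqxx //; lia.
Qed.

End NegativeIndices.

Lemma Fcal_nonpos n k : n <= 0 -> Fcal n k = Fneg k `|n|.+1.
Proof. by case: n => [[|m]|m]. Qed.

Theorem mainTheorem11 (k : nat) (n : int) :
  (2 <= k)%N -> n <= 0 ->
  let N := `|n|%N in
  let q := qnk n k in
  let r := rnk n k in
  ((r = 0%N) -> (2 <= q)%N ->
     let e := (N.+1 - 2 * k)%N in
     (Fcal n k)`_e = (if k == 2%N then 2 * (q%:Z) - 3 else q%:Z - 1)
     /\ (size (Fcal n k)).-1 = (e + k)%N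
     /\ (forall i : nat, (e < i < e + k)%N -> (Fcal n k)`_i = 0))
  /\
  ((1 <= r <= k.-1)%N -> (r.+1 <= q)%N ->
     let e := (N.+1 - k * r.+1)%N in
     (Fcal n k)`_e = (-1) ^+ r * (r.+1)%:Z * ('C(q.-1, r))%:Z
     /\ (size (Fcal n k)).-1 = (e + k)%N
     /\ (forall i : nat, (e < i < e + k)%N -> (Fcal n k)`_i = 0)).
Proof.
move=> k_gt1 n_le0 N q r; have k_gt0 : (0 < k)%N by lia.
have t_eq : N.+1 = (q * k + r)%N by rewrite /q /r /qnk /rnk -divn_eq.
have r_lt_k : (r < k)%N by rewrite /r /rnk ltn_mod.
rewrite Fcal_nonpos // -/N t_eq; clearbody N q r.
split=> [r0 q_ge2 e | r_pos q_gt_r e].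
- have [Q def_q] : exists Q, q = Q.+2 by exists q.-2; lia.
  have -> : e = (Q * k)%N by rewrite /e r0 def_q; lia.
  rewrite r0 addn0 def_q coef_Fneg_mulk // size_Fneg_mulk //.
  split; first by case: ifP; lia.
  split=> [|i hi]; first by lia.
  have -> : (Q.+2 * k = Q * k + k * 1%N.+1)%N by lia.
  exact: Fneg_gap.
- have [Q def_q] : exists Q, q = (Q + r.+1)%N by exists (q - r.+1)%N; lia.
  have -> : e = (Q * k + r)%N by rewrite /e def_q; lia.
  rewrite def_q coef_Fneg_rem // -addSnnS size_Fneg_rem //; last by lia.
  split; first by rewrite addSn.
  split=> [|i hi]; first by lia.
  have -> : ((Q.+1 + r) * k + r = Q * k + r + k * r.+1)%N by lia.
  exact: Fneg_gap.
Qed.
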